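(* There exist positive integers $m_0,t,L,q_0$, depending only on $k$, such that for every $(m_0,t,L,q_0)$-pseudo-random weight $\nu=(\nu_N)$ there is a function $N\mapsto\varepsilon(N)\ge0$ on primes with $\varepsilon(N)\to0$, such that for every prime $N$ and every $f:\mathbb{Z}_N\to\mathbb{R}$ with $|f(x)|\le1+\nu_N(x)$ for all $x$, one has $\max_{x\in\mathbb{Z}_N}|\mathcal Df(x)|\le2^{2^k-1}+\varepsilon(N)$.
   Context: Let $k\ge 2$ be a fixed integer. For a prime $N$, $\mathbb{Z}_N=\mathbb{Z}/N\mathbb{Z}$. For a finite set $A$ and $g:A\to\mathbb{R}$, $\mathbb{E}(g\mid A)=\frac{1}{|A|}\sum_{a\in A}g(a)$. For $\boldsymbol\omega\in\{0,1\}^k$ and $\mathbf t\in\mathbb{Z}_N^k$, $\boldsymbol\omega\cdot\mathbf t=\sum_i\omega_it_i$; $\mathbf 0=(0,\dots,0)$. The dual function of $f$ is $\mathcal Df(x)=\mathbb{E}\bigl(\prod_{\boldsymbol\omega\in\{0,1\}^k,\ \boldsymbol\omega\ne\mathbf 0}f(x+\boldsymbol\omega\cdot\mathbf t)\mid\mathbf t\in\mathbb{Z}_N^k\bigr)$. Let $m_0,t,L,q_0$ be positive integers. An $(m_0,t,L,q_0)$-pseudo-random weight is a family $\nu=(\nu_N)_{N\text{ prime}}$ of functions $\nu_N:\mathbb{Z}_N\to[0,\infty)$ satisfying: (Linear forms condition) $\sup\bigl|\mathbb{E}\bigl(\prod_{i=1}^m\nu_N(\psi_i(\mathbf{x}))\mid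 \mathbf{x}\in\mathbb{Z}_N^t\bigr)-1\bigr|\to 0$ as $N\to\infty$, where the supremum is over all $m\le m_0$ and all maps $\psi_1,\dots,\psi_m:\mathbb{Z}_N^t\to\mathbb{Z}_N$ of the form $\psi_i(\mathbf{x})=b_i+\sum_{j=1}^tL_{i,j}x_j$ with $b_i\in\mathbb{Z}$ arbitrary, $L_{i,j}\in\mathbb{Z}$, $|L_{i,j}|\le L$, each vector $(L_{i,j})_{1\le j\le t}\in\mathbb{Z}^t$ nonzero, and no two of these vectors collinear; (Correlation condition) there exist functions $\tau_N:\mathbb{Z}_N\to[0,\infty)$ with $\sup_N\mathbb{E}(\tau_N^p\mid\mathbb{Z}_N)<\infty$ for every integer $p\ge1$, such that for every prime $N$, every integer $q$ with $2\le q\le q_0$ and all $h_1,\dots,h_q\in\mathbb{Z}_N$ (not necessarily distinct), $\mathbb{E}\bigl(\nu_N(x+h_1)\cdots\nu_N(x+h_q)\mid x\in\mathbb{Z}_N\bigr)\le\sum_{1\le i<j\le q}\tau_N(h_i-h_j)$. *)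

From HB Require Import structures.
From mathcomp Require Import all_boot all_order all_algebra.
From mathcomp Require Import Rstruct.
From Stdlib Require Rdefinitions.
Set Implicit Arguments. Unset Strict Implicit. Unset Printing Implicit Defensive.
Import Order.TTheory GRing.Theory Num.Theory.
Local Open Scope ring_scope.

Notation R := Rdefinitions.R.

Definition avg (T : finType) (g : T -> R) : R :=
  (\sum_(a : T) g a) / (#|T|%:R).

Definition lin_form (N t : nat) (b : int) (Lrow : 'I_t -> int)
    (x : {ffun 'I_t -> 'Z_N}) : 'Z_N :=
  b%:~R + \sum_(j < t) (Lrow j)%:~R * x j.

Definition collinear (t : nat) (u v : 'I_t -> int) : Prop :=
  exists a b : int, (a != 0 \/ b != 0) /\ forall j, a * u j = b * v j.

(* Linear forms condition, with "sup |...| -> 0 as N -> oo" unfolded *)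
Definition linear_forms_cond (m0 t L : nat) (nu : forall N : nat, 'Z_N -> R)
  : Prop :=
  forall e : R, 0 < e -> exists N0 : nat, forall N : nat, prime N ->
    (N0 <= N)%N ->
    forall (m : nat), (m <= m0)%N ->
    forall (b : 'I_m -> int) (Lc : 'I_m -> 'I_t -> int),
      (forall i j, `|Lc i j| <= L%:Z) ->
      (forall i, exists j, Lc i j != 0) ->
      (forall i i', i != i' -> ~ collinear (Lc i) (Lc i')) ->
      `| avg (fun x : {ffun 'I_t -> 'Z_N} =>
                \prod_(i < m) nu N (lin_form (b i) (Lc i) x)) - 1 | <= e.

Definition correlation_cond (q0 : nat) (nu : forall N : nat, 'Z_N -> R)
  : Prop :=
  exists tau : forall N : nat, 'Z_N -> R,
    (forall N, prime N -> forall x, 0 <= tau N x) /\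
    (forall p : nat, (1 <= p)%N -> exists C : R,
        forall N, prime N -> avg (fun x : 'Z_N => tau N x ^+ p) <= C) /\
    (forall N, prime N -> forall q : nat, (2 <= q <= q0)%N ->
       forall h : 'I_q -> 'Z_N,
         avg (fun x : 'Z_N => \prod_(i < q) nu N (x + h i))
         <= \sum_(i < q) \sum_(j < q | (i < j)%N) tau N (h i - h j)).

(* (m0,t,L,q0)-pseudo-random weight; only the values at primes N matter *)
Definition pseudo_random_weight (m0 t L q0 : nat)
    (nu : forall N : nat, 'Z_N -> R) : Prop :=
  [/\ (forall N, prime N -> forall x, 0 <= nu N x),
      linear_forms_cond m0 t L nu & correlation_cond q0 nu].

Definition dual (k N : nat) (f : 'Z_N -> R) (x : 'Z_N) : R :=
  avg (fun tt : {ffun 'I_k -> 'Z_N} =>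
    \prod_(w : {ffun 'I_k -> bool} | w != [ffun => false])
       f (x + \sum_(i < k | w i) tt i)).

(** Expanding [|f| <= 1 + nu] over the 2^k - 1 nonzero vertices of the cube
    bounds [|D f(x)|] by the sum, over all sets J of nonzero vertices, of the
    average of [prod_(w in J) nu(x + w.t)].  Each such average is a linear
    forms average: the forms [t |-> x + w.t] have 0/1 coefficients, and
    distinct nonzero w give non-collinear coefficient vectors.  The linear
    forms condition (with m0 = 2^k, t = k, L = 1) makes each average
    1 + o(1) uniformly in x and J, and the 2^(2^k - 1) leading terms give the
    main term. *)
From HB Require Import structures.
From mathcomp Require Import all_boot all_order all_algebra.
From mathcomp Require Import Rstruct.
From mathcomp Require Import lra zify.
Import Order.TTheory GRing.Theory Num.Theory.
Set Implicit Arguments. Unset Strict Implicit. Unset Printing Implicit Defensive.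
Local Open Scope ring_scope.

Section Averages.
Variable T : finType.
Implicit Types g : T -> R.

Lemma ler_avg g1 g2 : (forall a, g1 a <= g2 a) -> avg g1 <= avg g2.
Proof.
by move=> le_g; rewrite /avg ler_wpM2r ?invr_ge0 ?ler0n // ler_sum.
Qed.

Lemma norm_avg_le g : `|avg g| <= avg (fun a => `|g a|).
Proof.
rewrite /avg normrM normfV normr_nat.
by rewrite ler_wpM2r ?invr_ge0 ?ler0n // ler_norm_sum.
Qed.

Lemma avg_sumr (I : finType) (P : pred I) (g : I -> T -> R) :
  avg (fun a => \sum_(i | P i) g i a) = \sum_(i | P i) avg (g i).
Proof. by rewrite /avg exchange_big mulr_suml. Qed.

End Averages.

Lemma prodD1_powerset (S : comPzSemiRingType) (I : finType) (A : {set I})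
    (a : I -> S) :
  \prod_(i in A) (1 + a i) = \sum_(J in powerset A) \prod_(i in J) a i.
Proof.
have cond1D i :
  (if i \in A then 1 + a i else 1) = (if i \in A then a i else 0) + 1.
  by case: ifP; rewrite ?add0r // addrC.
rewrite big_mkcond; under eq_bigr do rewrite cond1D.
rewrite bigA_distr (bigID (mem (powerset A))) /= [X in _ + X]big1 ?addr0.
  apply: eq_big => [J|J]; first by rewrite unfold_in.
  rewrite [RHS]big_mkcond powersetE => /subsetP sJA; apply: eq_bigr => i _.
  by case: ifP => // /sJA ->.
move=> J; rewrite powersetE => /subsetPn[i iJ iNA].
by rewrite (bigD1 i) //= iJ (negbTE iNA) mul0r.
Qed.

Definition nonzero_cube k : {set {ffun 'I_k -> bool}} := [set~ [ffun => false]].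

Lemma card_powerset_nonzero_cube k :
  #|powerset (nonzero_cube k)| = (2 ^ (2 ^ k - 1))%N.
Proof. by rewrite card_powerset cardsC1 card_ffun card_bool card_ord subn1. Qed.

Lemma neq_ffun_falseP k (w : {ffun 'I_k -> bool}) :
  reflect (exists j, w j) (w != [ffun => false]).
Proof.
apply: (iffP negP) => [nz | [j wj] /eqP/ffunP/(_ j)]; last by rewrite ffunE wj.
case: (pickP w) => [j wj | w0]; first by exists j.
by case: nz; apply/eqP/ffunP => j; rewrite ffunE w0.
Qed.

Definition cube_corr k N (g : 'Z_N -> R) (x : 'Z_N)
    (J : {set {ffun 'I_k -> bool}}) : R :=
  avg (fun tt : {ffun 'I_k -> 'Z_N} =>
         \prod_(w in J) g (x + \sum_(i < k | w i) tt i)).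

Section DualBound.
Variables (k N : nat) (nu f : 'Z_N -> R).
Hypothesis f_le : forall y, `|f y| <= 1 + nu y.

Lemma norm_dual_le_sum_cube_corr x :
  `|dual k f x| <= \sum_(J in powerset (nonzero_cube k)) cube_corr nu x J.
Proof.
apply: le_trans (norm_avg_le _) _; rewrite /cube_corr -avg_sumr.
apply: ler_avg => tt; rewrite normr_prod.
rewrite (eq_bigl (mem (nonzero_cube k))) => [|w]; last by rewrite !inE.
rewrite -prodD1_powerset; apply: ler_prod => w _.
by rewrite normr_ge0 f_le.
Qed.

Lemma norm_dual_le x :
  `|dual k f x| <= 2 ^+ (2 ^ k - 1) +
     \sum_(J in powerset (nonzero_cube k)) `|cube_corr nu x J - 1|.
Proof.
have -> : 2 ^+ (2 ^ k - 1) = \sum_(J in powerset (nonzero_cube k)) (1 : R).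
  by rewrite sumr_const card_powerset_nonzero_cube natrX.
rewrite -big_split /=; apply: le_trans (norm_dual_le_sum_cube_corr x) _.
by apply: ler_sum => J _; have := ler_norm (cube_corr nu x J - 1); lra.
Qed.

End DualBound.

Lemma cube_corr_lin_form k N (g : 'Z_N -> R) x
    (J : {set {ffun 'I_k -> bool}}) :
  cube_corr g x J =
  avg (fun tt : {ffun 'I_k -> 'Z_N} =>
     \prod_(i < #|J|) g (lin_form (x : nat)%:Z
                           (fun j => (enum_val i j : nat)%:Z) tt)).
Proof.
rewrite /cube_corr /avg; congr (_ * _); apply: eq_bigr => tt _.
rewrite big_enum_val; apply: eq_bigr => i _; congr (g _).
rewrite /lin_form -[in LHS](natr_Zp x); congr (_ + _).
rewrite big_mkcond; apply: eq_bigr => j _.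
by case: (enum_val i j); rewrite ?mul1r ?mul0r.
Qed.

Lemma cube_vectors_noncollinear k (u v : {ffun 'I_k -> bool}) :
  u != v -> u \in nonzero_cube k -> v \in nonzero_cube k ->
  ~ collinear (fun j => (u j : nat)%:Z) (fun j => (v j : nat)%:Z).
Proof.
rewrite !in_setC1 => neq_uv /neq_ffun_falseP[ju uju] /neq_ffun_falseP[jv vjv].
have [j neq_j] : exists j, u j != v j.
  case: (pickP (fun j => u j != v j)) => [j | eq_uv]; first by exists j.
  by case/eqP: neq_uv; apply/ffunP => j; move/negbFE/eqP: (eq_uv j).
case=> a [b [ab_neq0 eq_ab]].
move: (eq_ab j) (eq_ab ju) (eq_ab jv) ab_neq0 neq_j; rewrite uju vjv.
by case: (u j) (v j) (u jv) (v ju) => [] [] [] [] /=; lia.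
Qed.

Lemma cube_corr_cvg1 k (nu : forall N : nat, 'Z_N -> R) :
  linear_forms_cond #|{ffun 'I_k -> bool}| k 1 nu ->
  forall e : R, 0 < e -> exists N0 : nat, forall N, prime N -> (N0 <= N)%N ->
  forall (x : 'Z_N) J, J \in powerset (nonzero_cube k) ->
  `|cube_corr (nu N) x J - 1| <= e.
Proof.
move=> nu_lin e e_gt0; have [N0 nu_lin_N0] := nu_lin e e_gt0.
exists N0 => N pN leN0N x J; rewrite powersetE => /subsetP sJ.
rewrite cube_corr_lin_form; apply: nu_lin_N0 => //.
- exact: max_card.
- by move=> i j; case: (enum_val i j).
- move=> i; have /[!in_setC1] /neq_ffun_falseP[j wj] := sJ _ (enum_valP i).
  by exists j; rewrite wj.
- move=> i i' neq_ii'.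
  apply: cube_vectors_noncollinear; rewrite ?sJ ?enum_valP //.
  by apply: contra neq_ii' => /eqP /enum_val_inj ->.
Qed.

Theorem lemma4p2 (k : nat) (hk : (2 <= k)%N) :
  exists m0 t L q0 : nat,
    [/\ (0 < m0)%N, (0 < t)%N, (0 < L)%N & (0 < q0)%N] /\
    forall nu : forall N : nat, 'Z_N -> R,
      pseudo_random_weight m0 t L q0 nu ->
      exists eps : nat -> R,
        (forall N, prime N -> 0 <= eps N) /\
        (forall e : R, 0 < e -> exists N0 : nat,
            forall N, prime N -> (N0 <= N)%N -> eps N <= e) /\
        (forall N : nat, prime N -> forall f : 'Z_N -> R,
           (forall x, `|f x| <= 1 + nu N x) ->
           forall x, `|dual k f x| <= 2 ^+ (2 ^ k - 1)%N + eps N).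
Proof.
exists #|{ffun 'I_k -> bool}|, k, 1%N, 1%N; split.
  split => //; last exact: leq_trans hk.
  by apply/card_gt0P; exists [ffun => false].
move=> nu [_ nu_lin _].
pose dev N (x : 'Z_N) :=
  \sum_(J in powerset (nonzero_cube k)) `|cube_corr (nu N) x J - 1|.
exists (fun N => \big[Num.max/0]_(x : 'Z_N) dev N x).
split; first by move=> N _; exact: bigmax_ge_id.
split=> [e e_gt0 | N _ f f_le x]; last first.
  apply: le_trans (norm_dual_le k f_le x) _.
  by rewrite lerD2l (le_bigmax _ (dev N)).
have pow_gt0 : 0 < (2 : R) ^+ (2 ^ k - 1) by rewrite exprn_gt0.
have [N0 near1] := cube_corr_cvg1 nu_lin (divr_gt0 e_gt0 pow_gt0).
exists N0 => N pN leN0N; apply: bigmax_le => [|x _]; first exact: ltW.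
apply: le_trans (ler_sum _ (fun J => near1 N pN leN0N x J)) _.
rewrite sumr_const card_powerset_nonzero_cube -[_ *+ _]mulr_natr natrX.
by rewrite divfK ?gt_eqF.
Qed.
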